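(* Let $v$ be a flow on a surface $S$. Every circuit with wandering holonomy is not a periodic orbit, and it contains a point of $\Omega(v)-\overline{\mathrm{Cl}(v)}$.
   Context: Surface: 2-dimensional paracompact manifold. $\mathrm{Cl}(v)$ is the union of singular points and periodic orbits; $\Omega(v)$ the set of non-wandering points. A separatrix is a non-singular orbit whose $\alpha$- or $\omega$-limit set is a singular point. A non-trivial circuit is the image of an oriented circle under a continuous orientation-preserving map which is either a periodic orbit, or a directed graph (not a singleton) that is a union of separatrices and finitely many singular points. A circuit with wandering holonomy is a non-trivial circuit $\gamma$ for which there are a non-singular point $x\in\gamma$ and arbitrarily small open transverse arcs $I$ containing $x$ such that the (partially defined) first return map on $I$ is orientation-reversing, has nonempty domain, and its domain and image are disjoint. *)

From HB Require Import structures.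
From mathcomp Require Import all_boot all_order all_algebra.
From mathcomp Require Import all_classical all_reals all_analysis.
From mathcomp Require Import Rstruct Rstruct_topology.
Set Implicit Arguments. Unset Strict Implicit. Unset Printing Implicit Defensive.
Import Order.TTheory GRing.Theory Num.Theory.
Local Open Scope classical_set_scope.
Local Open Scope ring_scope.

Notation R := Rdefinitions.R.

Definition paracompact (S : topologicalType) : Prop :=
  forall (I : Type) (U : I -> set S),
    (forall i, open (U i)) -> \bigcup_(i in setT) U i = setT ->
    exists (J : Type) (W : J -> set S),
      (forall j, open (W j)) /\ \bigcup_(j in setT) W j = setT /\
      (forall j, exists i, W j `<=` U i) /\
      (forall x : S, exists N, nbhs x N /\ finite_set [set j | W j `&` N !=set0]).

Definition locally_euclidean2 (S : topologicalType) : Prop :=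
  forall x : S, exists (U : set S) (phi : S -> R * R),
    open U /\ U x /\
    {within U, continuous phi} /\ {in U &, injective phi} /\
    (forall A, open A -> A `<=` U -> open (phi @` A)).

Definition surface (S : topologicalType) : Prop :=
  hausdorff_space S /\ paracompact S /\ locally_euclidean2 S.

Definition is_flow (S : topologicalType) (v : R -> S -> S) : Prop :=
  continuous (fun p : R * S => v p.1 p.2) /\
  (forall x, v 0 x = x) /\
  (forall s t x, v (s + t) x = v s (v t x)).

Section FlowNotions.
Variables (S : topologicalType) (v : R -> S -> S).

Definition orbit (x : S) : set S := range (fun t => v t x).

Definition singular (x : S) : Prop := forall t, v t x = x.

Definition periodic_point (x : S) : Prop :=
  ~ singular x /\ exists T, 0 < T /\ v T x = x.

Definition periodic_orbit (P : set S) : Prop :=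
  exists x, periodic_point x /\ P = orbit x.

Definition Cl : set S := [set x | singular x \/ periodic_point x].

Definition nonwandering (x : S) : Prop :=
  forall U, nbhs x U -> forall T : R,
    exists t, T < t /\ exists y, U y /\ U (v t y).

Definition omega_limit (x : S) : set S :=
  [set y | forall T : R, closure [set v t x | t in [set t | T <= t]] y].
Definition alpha_limit (x : S) : set S :=
  [set y | forall T : R, closure [set v t x | t in [set t | t <= T]] y].

Definition separatrix (x : S) : Prop :=
  ~ singular x /\
  ((exists p, singular p /\ omega_limit x = [set p]) \/
   (exists p, singular p /\ alpha_limit x = [set p])).

(* an oriented circle is parameterized as a 1-periodic map R -> S;
   orientation preserving: near every parameter whose image is non-singular,
   the map moves along the orbit in the forward time direction *)
Definition orientation_preserving (f : R -> S) : Prop :=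
  forall th, ~ singular (f th) ->
    exists delta : R, 0 < delta /\ exists tau : R -> R,
      tau 0 = 0 /\
      (forall s1 s2, - delta < s1 -> s1 <= s2 -> s2 < delta -> tau s1 <= tau s2) /\
      (forall s, - delta < s -> s < delta -> f (th + s) = v (tau s) (f th)).

Definition nontrivial_circuit (g : set S) : Prop :=
  exists f : R -> S,
    continuous f /\ (forall th, f (th + 1) = f th) /\
    orientation_preserving f /\ g = range f /\
    (periodic_orbit g \/
     ((exists (P : set S) (E : set S),
          finite_set P /\ (forall p, P p -> singular p) /\
          (forall e, E e -> separatrix e) /\
          g = P `|` \bigcup_(e in E) orbit e) /\
      ~ (exists p, g = [set p]))).

(* open arcs: images of embeddings R -> S *)
Definition open_arc (h : R -> S) : Prop :=
  continuous h /\ injective h /\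
  (forall A : set R, open A -> exists B : set S, open B /\ h @` A = B `&` range h).

(* transverse open arc: there is a flow box (t,s) |-> v t (h s) on
   ]-eps,eps[ x R which is a homeomorphism onto an open set *)
Definition transverse_arc (h : R -> S) : Prop :=
  open_arc h /\
  exists eps : R, 0 < eps /\
    let D := [set p : R * R | - eps < p.1 /\ p.1 < eps] in
    let F := fun p : R * R => v p.1 (h p.2) in
    (forall p q, D p -> D q -> F p = F q -> p = q) /\
    (forall A, open A -> A `<=` D -> open (F @` A)).

(* the (partially defined) first return map on I, as a relation *)
Definition first_return (I : set S) (y z : S) : Prop :=
  I y /\ exists t, 0 < t /\ v t y = z /\ I z /\
    (forall s, 0 < s -> s < t -> ~ I (v s y)).

Definition return_dom (I : set S) : set S := [set y | exists z, first_return I y z].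
Definition return_img (I : set S) : set S := [set z | exists y, first_return I y z].

Definition return_orientation_reversing (h : R -> S) : Prop :=
  forall a b a' b', first_return (range h) (h a) (h a') ->
    first_return (range h) (h b) (h b') -> a < b -> b' < a'.

Definition circuit_with_wandering_holonomy (g : set S) : Prop :=
  nontrivial_circuit g /\
  exists x, g x /\ ~ singular x /\
    forall U, nbhs x U ->
      exists h : R -> S,
        transverse_arc h /\ range h `<=` U /\ range h x /\
        return_orientation_reversing h /\
        return_dom (range h) !=set0 /\
        return_dom (range h) `&` return_img (range h) = set0.

End FlowNotions.

From Pilot Require Import Defs.
From HB Require Import structures.
From mathcomp Require Import all_boot all_order all_algebra.
From mathcomp Require Import all_classical all_reals all_analysis.
From mathcomp Require Import Rstruct Rstruct_topology.
From mathcomp Require Import lra.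
Set Implicit Arguments. Unset Strict Implicit. Unset Printing Implicit Defensive.
Import Order.TTheory GRing.Theory Num.Theory.
Local Open Scope classical_set_scope.
Local Open Scope ring_scope.

(* The wandering transverse arc h through x has a flow box, and the first
   return data of h control everything.  No point of the box lies in Cl(v): a
   singular point would let the flow carry the arc into itself in short time,
   against injectivity of the box; a periodic one would, following its orbit
   forwards and backwards to the first hits of h, give a point of h lying both
   in the domain and in the image of the return map, which are disjoint.  So x
   is not in the closure of Cl(v), and the circuit is not a periodic orbit.
   For non-wandering, arbitrarily small arcs near x carry returns.  A return in
   short time is impossible: a transverse arc inside the flow box cannot meet a
   plaque twice, since its transverse coordinate would have an interior
   extremum and hence fold, putting two nearby points of the arc on one orbit.
   Returns at times in a compact interval [d, T] with d > 0 are excluded by a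
   tube around the non-periodic orbit of x, so return times are unbounded. *)

Lemma interior_extremum_not_inj (g : R -> R) l c r :
  l < c -> c < r -> {within `[l, r], continuous g} ->
  (forall t, t \in `[l, r] -> g t <= g c) \/ (forall t, t \in `[l, r] -> g c <= g t) ->
  ~ {in `[l, r] &, injective g}.
Proof.
move=> lc cr gC ext gI.
have lI : l \in `[l, r] by rewrite in_itv /= lexx ltW // (lt_trans lc cr).
have rI : r \in `[l, r] by rewrite in_itv /= lexx ltW // (lt_trans lc cr).
have cI : c \in `[l, r] by rewrite in_itv /= !ltW.
by case: (itv_continuous_inj_mono gC gI) => mono; case: ext => ext;
  [ have := mono _ _ cI rI cr | have := mono _ _ lI cI lc
  | have := mono _ _ cI lI lc | have := mono _ _ rI cI cr ];
  rewrite ltNge ext.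
Qed.

Lemma segment_interior_extremum (g : R -> R) a b :
  a < b -> {within `[a, b], continuous g} -> g a = g b ->
  exists2 c, a < c < b &
    (forall t, t \in `[a, b] -> g t <= g c) \/ (forall t, t \in `[a, b] -> g c <= g t).
Proof.
move=> ab gC gab.
have [cM + maxM] := EVT_max (ltW ab) gC; rewrite in_itv /= => /andP [aM Mb].
have [cm + minm] := EVT_min (ltW ab) gC; rewrite in_itv /= => /andP [am mb].
have [inM|outM] := boolP (a < cM < b); first by exists cM => //; left.
have [inm|outm] := boolP (a < cm < b); first by exists cm => //; right.
have endpoint t : a <= t -> t <= b -> ~~ (a < t < b) -> g t = g a.
  move=> ta0 tb0; rewrite negb_and -!leNgt => /orP [ta | bt].
    by rewrite (@le_anti _ _ t a) // ta ta0.
  by rewrite (@le_anti _ _ t b) ?gab // bt tb0.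
have gM := endpoint _ aM Mb outM; have gm := endpoint _ am mb outm.
have mid : a < (a + b) / 2 < b by apply/andP; split; lra.
have gmid : g ((a + b) / 2) = g a.
  have midI : (a + b) / 2 \in `[a, b] by rewrite in_itv /=; apply/andP; split; lra.
  by apply/eqP; rewrite eq_le -{1}gM maxM //= -{1}gm minm.
by exists ((a + b) / 2) => //; left => t tI; rewrite gmid -gM maxM.
Qed.

Lemma segment_fold (g s : R -> R) a b e :
  a < b -> 0 < e -> {within `[a, b], continuous g} -> g a = g b ->
  {in `[a, b], continuous s} ->
  exists u1 u2, [/\ u1 \in `[a, b], u2 \in `[a, b], u1 != u2, g u1 = g u2
                 & `|s u1 - s u2| < e].
Proof.
move=> ab e0 gC gab sC.
have [c /andP [ac cb] ext] := segment_interior_extremum ab gC gab.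
have cI : c \in `[a, b] by rewrite in_itv /= !ltW.
have e20 : 0 < e / 2 by lra.
have := @cvgr_dist_lt _ R^o _ _ (nbhs_filter c) s (s c) (sC c cI) _ e20.
move=> /nbhs_ballP [d /= d0 near_c].
have [l [al lc cl]] : exists l, [/\ a <= l, l < c & c - l < d].
  by case: (lerP a (c - d / 2)) => ?; [exists (c - d / 2) | exists a]; split; lra.
have [r [rb cr rc]] : exists r, [/\ r <= b, c < r & r - c < d].
  by case: (lerP (c + d / 2) b) => ?; [exists (c + d / 2) | exists b]; split; lra.
have lrab : `[l, r] `<=` `[a, b].
  by move=> u /=; rewrite !in_itv /= => /andP [lu ur]; apply/andP; split; lra.
have [u1 [u2 [u1I u2I gu ne]]] :
    exists u1 u2, [/\ u1 \in `[l, r], u2 \in `[l, r], g u1 = g u2 & u1 != u2].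
  apply: contrapT => noncoll.
  apply: (interior_extremum_not_inj lc cr (continuous_subspaceW lrab gC)).
    by case: ext => ext; [left | right] => t /lrab/ext.
  move=> u1 u2 u1I u2I gu; apply: contrapT => /eqP ne.
  by apply: noncoll; exists u1, u2.
have near_u u : u \in `[l, r] -> `|s c - s u| < e / 2.
  rewrite in_itv /= => /andP [lu ur]; apply: near_c => /=.
  rewrite /ball /= ltr_distlC; apply/andP; split; lra.
exists u1, u2; split => //; [exact: lrab | exact: lrab |].
move: (near_u _ u1I) (near_u _ u2I); rewrite !ltr_norml => /andP [? ?] /andP [? ?].
by apply/andP; split; lra.
Qed.

Lemma separated_set_has_min (P : set R) e :
  0 < e -> has_lbound P -> P !=set0 ->
  (forall t t', P t -> P t' -> `|t - t'| < e -> t = t') ->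
  exists2 t1, P t1 & forall t, P t -> t1 <= t.
Proof.
move=> e0 Plb [t0 Pt0] sep.
have Pinf : has_inf P by split => //; exists t0.
have [t1 Pt1 t1lt] := inf_adherent e0 Pinf.
exists t1 => // t Pt; rewrite leNgt; apply/negP => tt1.
have inf_t1 := ge_inf Plb Pt1; have inf_t := ge_inf Plb Pt.
have : t = t1 by apply: sep => //; rewrite ltr_norml; apply/andP; split; lra.
lra.
Qed.

Definition strip (eps : R) : set (R * R) := [set p | - eps < p.1 /\ p.1 < eps].

Lemma open_strip eps : open (strip eps).
Proof.
have -> : strip eps = fst @^-1` `]- eps, eps[.
  by apply/seteqP; split => p /=; rewrite in_itv /=; [case=> -> -> | case/andP].
by apply: open_comp => [p _ | ]; [exact: cvg_fst | exact: (@interval_open R^o)].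
Qed.

Lemma no_return_tube (S : topologicalType) (v : R -> S -> S) (x : S) (d T : R) :
  hausdorff_space S -> continuous (fun p : R * S => v p.1 p.2) ->
  (forall t, d <= t -> t <= T -> v t x <> x) ->
  exists2 W, nbhs x W &
    forall y w t, W y -> W w -> d <= t -> t <= T -> v t y <> w.
Proof.
move=> hS vC nret.
have near_t t : [set` `[d, T]] t ->
    \forall t' \near t & yw \near nbhs (x, x), v t' yw.1 <> yw.2.
  rewrite /= in_itv /= => /andP [dt tT].
  have [A [B [nA nB AB]]] :
      exists A B, [/\ nbhs (v t x) A, nbhs x B & forall z, A z -> B z -> False].
    apply: contrapT => sep; apply: (nret t dt tT); apply: hS => A B nA nB.
    apply: contrapT => AB; apply: sep; exists A, B; split => // z Az Bz.
    by apply: AB; exists z.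
  case: (vC (t, x) A nA) => -[Nt Nx] /= [nNt nNx] NA.
  exists (Nt, Nx `*` B) => /=; first by split => //; exists (Nx, B).
  move=> [t' [y w]] /= [Nt' [Nxy Bw]] vyw.
  by apply: (AB w) => //; rewrite -vyw; exact: (NA (t', y)).
have := (compact_near_coveringP _).1 (@segment_compact _ d T) (S * S)%type
  (nbhs (x, x)) (fun yw t => v t yw.1 <> yw.2) _ near_t.
case=> -[W1 W2] /= [nW1 nW2] W12.
exists (W1 `&` W2) => [|y w t [y1 y2] [w1 w2] dt tT]; first exact: filterI.
by apply: (W12 (y, w)) => //=; rewrite in_itv /= dt tT.
Qed.

Section Flow.
Variables (S : topologicalType) (v : R -> S -> S).
Hypothesis hv : is_flow v.

Lemma flow0 x : v 0 x = x.
Proof. by case: hv => _ []. Qed.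

Lemma flowD s t x : v s (v t x) = v (s + t) x.
Proof. by case: hv => _ [_ ->]. Qed.

Lemma flowK s x : v (- s) (v s x) = x.
Proof. by rewrite flowD addNr flow0. Qed.

Lemma singular_flow s x : singular v x -> singular v (v s x).
Proof. by move=> sx t; rewrite flowD addrC -flowD sx. Qed.

Lemma Cl_flow s x : Cl v (v s x) -> Cl v x.
Proof.
rewrite /Cl /= => -[sx | [nsx [T [T0 xT]]]].
  by left; rewrite -(flowK s x); exact: singular_flow.
right; split; first by move=> /(singular_flow s).
by exists T; split => //; rewrite -{1}(flowK s x) flowD addrC -flowD xT flowK.
Qed.

Definition box (h : R -> S) (p : R * R) : S := v p.1 (h p.2).

Definition box_injective (h : R -> S) (eps : R) :=
  forall p q, strip eps p -> strip eps q -> box h p = box h q -> p = q.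

Definition box_open (h : R -> S) (eps : R) :=
  forall A, open A -> A `<=` strip eps -> open (box h @` A).

Lemma transverse_arc_box h : transverse_arc v h ->
  continuous h /\ exists2 eps, 0 < eps & box_injective h eps /\ box_open h eps.
Proof. by case=> [[hC _] [eps [eps0 boxIO]]]; split => //; exists eps. Qed.

Section ArcReturns.
Variables (h : R -> S) (eps : R).
Hypotheses (eps0 : 0 < eps) (boxI : box_injective h eps).

Lemma arc_small_return t a b : `|t| < eps -> v t (h a) = h b -> t = 0 /\ a = b.
Proof.
rewrite ltr_norml => /andP [t1 t2] tab.
suff [-> ->] : (t, a) = (0, b) by [].
by apply: boxI; rewrite /strip /box /= ?flow0 //; split; lra.
Qed.

Lemma arc_hits_separated y t t' :
  range h (v t y) -> range h (v t' y) -> `|t - t'| < eps -> t = t'.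
Proof.
move=> [a _ ya] [b _ yb] tt'.
have [/eqP + _] : t' - t = 0 /\ a = b.
  by apply: arc_small_return; [rewrite distrC | rewrite ya flowD subrK].
by rewrite subr_eq0 eq_sym => /eqP.
Qed.

(* [c = 1] looks forwards along the orbit of [y], [c = -1] backwards. *)
Lemma first_arc_hit (c : R) y T : `|c| = 1 -> 0 < T -> range h (v (c * T) y) ->
  exists2 t1, 0 < t1 /\ range h (v (c * t1) y) &
    forall t, 0 < t /\ range h (v (c * t) y) -> t1 <= t.
Proof.
move=> c1 T0 hitT.
apply: (@separated_set_has_min [set t | 0 < t /\ range h (v (c * t) y)] eps eps0).
- by exists 0 => t [/ltW].
- by exists T.
move=> t t' [_ hit] [_ hit'] tt'; apply: (mulfI (_ : c != 0)).
  by rewrite -normr_eq0 c1 oner_eq0.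
by apply: arc_hits_separated hit hit' _; rewrite -mulrBr normrM c1 mul1r.
Qed.

Lemma periodic_arc_returns r : periodic_point v (h r) ->
  return_dom v (range h) (h r) /\ return_img v (range h) (h r).
Proof.
case=> _ [T [T0 hT]].
have hTN : v (- T) (h r) = h r by rewrite -{1}hT flowK.
have hr : range h (h r) by exists r.
have [t1 [t10 hit1] min1] : exists2 t1, 0 < t1 /\ range h (v (1 * t1) (h r)) &
    forall t, 0 < t /\ range h (v (1 * t) (h r)) -> t1 <= t.
  by apply: first_arc_hit (normr1 _) T0 _; rewrite mul1r hT.
have [s1 [s10 hit1'] min1'] : exists2 s1, 0 < s1 /\ range h (v (-1 * s1) (h r)) &
    forall t, 0 < t /\ range h (v (-1 * t) (h r)) -> s1 <= t.
  by apply: first_arc_hit (normrN1 _) T0 _; rewrite mulN1r hTN.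
split.
  rewrite mul1r in hit1; exists (v t1 (h r)); split => //.
  by exists t1; split => //; split => //; split => // u u0 ut1 hu;
    have := min1 u; rewrite mul1r => /(_ (conj u0 hu)); lra.
exists (v (- s1) (h r)); rewrite mulN1r in hit1'; split => //.
exists s1; rewrite flowD addrN flow0; split => //; split => //; split => // u u0 us1 hu.
rewrite flowD in hu; have := min1' (s1 - u); rewrite mulN1r opprB subr_gt0.
by move=> /(_ (conj us1 hu)); lra.
Qed.

Lemma arc_not_singular r : ~ singular v (h r).
Proof.
move=> sing; have [] : eps / 2 = 0 /\ r = r.
  by apply: (arc_small_return _ (sing _)); rewrite gtr0_norm; move: eps0; lra.
by move: eps0; lra.
Qed.

Lemma box_not_Cl p :
  return_dom v (range h) `&` return_img v (range h) = set0 ->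
  strip eps p -> ~ Cl v (box h p).
Proof.
case: p => s r wand _ /Cl_flow [/arc_not_singular // | per].
have [dom img] := periodic_arc_returns per.
by rewrite -[False]/(set0 (h r)) -wand.
Qed.

End ArcReturns.

Section BoxChart.
Variables (h : R -> S) (eps : R).
Hypotheses (boxI : box_injective h eps) (boxO : box_open h eps).

Definition box_coord (x : S) : R * R :=
  xget (0, 0) [set p | strip eps p /\ box h p = x].

Lemma box_coordK p : strip eps p -> box_coord (box h p) = p.
Proof.
move=> sp; have [sq hq] := @xgetPex _ (0, 0)
  [set q | strip eps q /\ box h q = box h p] (ex_intro _ p (conj sp erefl)).
exact: boxI.
Qed.

Lemma box_coord_continuous p : strip eps p -> {for box h p, continuous box_coord}.
Proof.
move=> sp N; rewrite box_coordK // nbhsE; case=> O [oO Op] ON.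
rewrite nbhsE; exists (box h @` (O `&` strip eps)).
  split; last by exists p.
  by apply: boxO => [|q []//]; apply: openI => //; exact: open_strip.
by move=> _ [q [Oq sq] <-] /=; apply: ON; rewrite box_coordK.
Qed.

Lemma box_nbhs d p : d <= eps -> strip d p -> nbhs (box h p) (box h @` strip d).
Proof.
move=> de sp; apply: open_nbhs_nbhs; split; last by exists p.
by apply: boxO => [|q [q1 q2]]; [exact: open_strip | split; lra].
Qed.

Lemma arc_in_box_no_fold k epsk a b :
  continuous k -> box_injective k epsk -> 0 < epsk ->
  range k `<=` box h @` strip eps -> a < b ->
  (box_coord (k a)).2 != (box_coord (k b)).2.
Proof.
move=> kC boxIk epsk0 kbox ab; apply/eqP => same.
have kcoord u : box h (box_coord (k u)) = k u /\ {for u, continuous (box_coord \o k)}.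
  have [p sp kp] := kbox (k u) (imageT k u).
  split; first by rewrite -kp box_coordK.
  apply: continuous_comp; first exact: kC.
  by rewrite -kp; exact: box_coord_continuous.
have gC : continuous (fun u => (box_coord (k u)).2).
  by move=> u; apply: continuous_comp (kcoord u).2 _; exact: cvg_snd.
have sC : continuous (fun u => (box_coord (k u)).1).
  by move=> u; apply: continuous_comp (kcoord u).2 _; exact: cvg_fst.
have [u1 [u2 [_ _ ne gu su]]] := segment_fold ab epsk0
  (continuous_subspaceT gC) same (in1W sC).
set q1 := box_coord (k u1) in gu su; set q2 := box_coord (k u2) in gu su.
have [_ /eqP] : q2.1 - q1.1 = 0 /\ u1 = u2.
  apply: (arc_small_return boxIk); first by rewrite distrC.
  by rewrite -(kcoord u1).1 -(kcoord u2).1 -/q1 -/q2 /box flowD subrK gu.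
by rewrite (negbTE ne).
Qed.

Lemma arc_no_short_return k epsk t a b :
  continuous k -> box_injective k epsk -> 0 < epsk ->
  range k `<=` box h @` strip (eps / 2) ->
  `|t| < eps / 2 -> v t (k a) = k b -> t = 0.
Proof.
move=> kC boxIk epsk0 kbox; rewrite ltr_norml => /andP [t1 t2] kab.
have [[s1 r1] [/= s11 s12] ka] := kbox _ (imageT k a).
have [[s2 r2] [/= s21 s22] kb] := kbox _ (imageT k b).
have [ts r12] : (t + s1, r1) = (s2, r2).
  apply: boxI; [split => /=; lra | split => /=; lra |].
  by move: ka kb; rewrite /box /= -flowD => -> ->.
have kbox' : range k `<=` box h @` strip eps.
  by move=> _ /kbox [q [q1 q2] <-]; exists q => //; split; lra.
have [ab | ba | ab] := ltgtP a b.
- have := arc_in_box_no_fold kC boxIk epsk0 kbox' ab.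
  by rewrite -ka -kb !box_coordK /strip //= ?r12 ?eqxx //; split; lra.
- have := arc_in_box_no_fold kC boxIk epsk0 kbox' ba.
  by rewrite -ka -kb !box_coordK /strip //= ?r12 ?eqxx //; split; lra.
have [s1s2] : (s1, r1) = (s2, r2).
  by apply: boxI; [split => /=; lra | split => /=; lra | rewrite ka kb ab].
lra.
Qed.

End BoxChart.

Lemma nonwandering_of_arc_returns x h eps r :
  hausdorff_space S -> 0 < eps -> box_injective h eps -> box_open h eps ->
  x = box h (0, r) -> (forall t, 0 < t -> v t x <> x) ->
  (forall U, nbhs x U -> exists k, [/\ transverse_arc v k, range k `<=` U
                                      & return_dom v (range k) !=set0]) ->
  nonwandering v x.
Proof.
move=> hS eps0 boxI boxO xE aper returns U nU T.
have [T1 epsT1 TT1] : exists2 T1, eps / 2 <= T1 & T <= T1.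
  by case: (lerP (eps / 2) T) => ?; [exists T | exists (eps / 2)]; lra.
have [W nW tubeW] : exists2 W, nbhs x W &
    forall y w t, W y -> W w -> eps / 2 <= t -> t <= T1 -> v t y <> w.
  by apply: no_return_tube hS hv.1 _ => t epst _; apply: aper; lra.
have nbox : nbhs x (box h @` strip (eps / 2)).
  by rewrite xE; apply: (box_nbhs boxO); [lra | split => /=; lra].
have [k [trk kU [y [z [[a _ ya] [t [t0 [yz [[b _ zb] _]]]]]]]]] :=
  returns _ (filterI (filterI nU nW) nbox).
have [kC [epsk epsk0 [boxIk _]]] := transverse_arc_box trk.
have [[Uy Wy] _] : (U `&` W `&` box h @` strip (eps / 2)) y by apply: kU; exists a.
have [[Uz Wz] _] : (U `&` W `&` box h @` strip (eps / 2)) z by apply: kU; exists b.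
have T1t : T1 < t.
  rewrite ltNge; apply/negP => tT1; have [teps | epst] := ltrP t (eps / 2).
    have kbox : range k `<=` box h @` strip (eps / 2) by move=> ? /kU [].
    have kab : v t (k a) = k b by rewrite ya zb.
    have tsmall : `|t| < eps / 2 by rewrite gtr0_norm.
    by have := arc_no_short_return boxI boxO kC boxIk epsk0 kbox tsmall kab; lra.
  exact: tubeW y z t Wy Wz epst tT1 yz.
by exists t; split; [lra | exists y; rewrite yz].
Qed.

End Flow.

Theorem mainTheorem6 (S : topologicalType) (hS : surface S)
  (v : R -> S -> S) (hv : is_flow v) (g : set S)
  (hg : circuit_with_wandering_holonomy v g) :
  ~ periodic_orbit v g /\
  exists x, g x /\ nonwandering v x /\ ~ closure (Cl v) x.
Proof.
case: hg => _ [x [gx [nsx holonomy]]].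
have [h [trh [_ [[r _ hr] [_ [_ wand]]]]]] := holonomy setT filterT.
have [_ [eps eps0 [boxI boxO]]] := transverse_arc_box trh.
have xE : x = box v h (0, r) by rewrite /box (flow0 hv).
have r0 : strip eps (0, r) by split => /=; lra.
have notClx : ~ Cl v x by rewrite xE; exact: (box_not_Cl hv eps0 boxI wand r0).
split.
  case=> p [pp gE]; have [t _ px] : Defs.orbit v p x by rewrite -gE.
  by apply: notClx; apply: (Cl_flow hv (s := - t)); rewrite -px (flowK hv); right.
exists x; split => //; split.
  apply: (nonwandering_of_arc_returns hv hS.1 eps0 boxI boxO xE).
    by move=> t t0 xt; apply: notClx; right; split => //; exists t.
  by move=> U /holonomy [k [trk [kU [_ [_ [dom _]]]]]]; exists k.
rewrite xE => /(_ _ (box_nbhs boxO (lexx eps) r0)) [z [Clz [p sp pz]]].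
by apply: (box_not_Cl hv eps0 boxI wand sp); rewrite pz.
Qed.
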